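(* If $\tau$ is a tau function of the Pfaff–Toda hierarchy, then $$\tfrac12D_{t_1}D_{\bar t_1}\tau(s,r)\cdot\tau(s,r)+\tau(s-1,r)\tau(s+1,r)-\tau(s,r-1)\tau(s,r+1)=0$$ and $$D_{t_1}\tau(s,r)\cdot\tau(s+1,r-1)+D_{\bar t_1}\tau(s,r-1)\cdot\tau(s+1,r)=0.$$
   Context: Let $\boldsymbol t=(t_1,t_2,\dots)$, $\bar{\boldsymbol t}=(\bar t_1,\bar t_2,\dots)$ be infinite sequences of continuous variables and $s,r\in\mathbb Z$. Put $[z]=(z,z^2/2,z^3/3,\dots)$, $\xi(\boldsymbol t,z)=\sum_{k\ge1}t_kz^k$. For a formal Laurent series $f(z)=\sum_na_nz^n$ write $\oint\frac{dz}{2\pi i}f(z)=a_{-1}$. A tau function of the Pfaff–Toda hierarchy is a nowhere vanishing function $\tau(s,r,\boldsymbol t,\bar{\boldsymbol t})$ such that for all $(s,r,\boldsymbol t,\bar{\boldsymbol t})$, $(s',r',\boldsymbol t',\bar{\boldsymbol t}')$: $$\oint\frac{dz}{2\pi i}z^{s'+r'-s-r}e^{\xi(\boldsymbol t'-\boldsymbol t,z)}\tau(s',r',\boldsymbol t'-[z^{-1}],\bar{\boldsymbol t}')\tau(s,r,\boldsymbol t+[z^{-1}],\bar{\boldsymbol t})+\oint\frac{dz}{2\pi i}z^{s+r-s'-r'-4}e^{\xi(\boldsymbol t-\boldsymbol t',z)}\tau(s'+1,r'+1,\boldsymbol t'+[z^{-1}],\bar{\boldsymbol t}')\tau(s-1,r-1,\boldsymbol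 t-[z^{-1}],\bar{\boldsymbol t})$$ $$=\oint\frac{dz}{2\pi i}z^{s'-r'-s+r}e^{\xi(\bar{\boldsymbol t}'-\bar{\boldsymbol t},z^{-1})}\tau(s'+1,r',\boldsymbol t',\bar{\boldsymbol t}'-[z])\tau(s-1,r,\boldsymbol t,\bar{\boldsymbol t}+[z])+\oint\frac{dz}{2\pi i}z^{s-r-s'+r'}e^{\xi(\bar{\boldsymbol t}-\bar{\boldsymbol t}',z^{-1})}\tau(s',r'+1,\boldsymbol t',\bar{\boldsymbol t}'+[z])\tau(s,r-1,\boldsymbol t,\bar{\boldsymbol t}-[z]),$$ where the two left-hand integrands are expanded at $z=\infty$ and the two right-hand ones at $z=0$. Abbreviate $\tau(s,r)=\tau(s,r,\boldsymbol t,\bar{\boldsymbol t})$. Hirota's bilinear derivative: $D_xf\cdot g=(\partial_xf)g-f\,\partial_xg$, and $D_xD_yf\cdot g=\partial_u\partial_v\big(f(x+u,y+v)g(x-u,y-v)\big)|_{u=v=0}$. *)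

(* Tau functions are modelled as FORMAL power series in the
   variables t = (t_1,t_2,...) and tbar = (tbar_1,tbar_2,...) over a
   characteristic-zero field K (numFieldType). *)
From HB Require Import structures.
From mathcomp Require Import all_boot all_order all_algebra.
Set Implicit Arguments. Unset Strict Implicit. Unset Printing Implicit Defensive.
Import Order.TTheory GRing.Theory Num.Theory.
Local Open Scope ring_scope.

(* A monomial in t_1,t_2,...: the exponent of t_{i+1} is [nth 0 m i]
   (trailing zeros are irrelevant). *)
Definition mono := seq nat.

(* A formal power series in (t, tbar): coefficient of t^a tbar^c is [f a c]. *)
Definition ps (K : Type) := mono -> mono -> K.

Definition addm (a b : mono) : mono :=
  mkseq (fun i => (nth 0 a i + nth 0 b i)%N) (maxn (size a) (size b)).
Definition subm (a b : mono) : mono :=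
  mkseq (fun i => (nth 0 a i - nth 0 b i)%N) (size a).

Fixpoint box (a : mono) : seq mono :=
  match a with
  | [::] => [:: [::]]
  | x :: a' => [seq i :: b | i <- iota 0 x.+1, b <- box a']
  end.

Definition wt (a : mono) : nat := (\sum_(i < size a) (i.+1 * nth 0 a i))%N.

Definition wts (n : nat) : seq mono := [seq b <- box (nseq n n) | wt b == n].

(* tau(s,r,t,tbar) as a formal series, from its coefficient function
   T s r alpha alphabar = coefficient of t^alpha tbar^alphabar *)
Definition tps (K : Type) (T : int -> int -> (nat -> nat) -> (nat -> nat) -> K)
  (s r : int) : ps K := fun a c => T s r (nth 0 a) (nth 0 c).

Section Ops.
Variable K : numFieldType.

Definition mulps (f g : ps K) : ps K := fun a c =>
  \sum_(a1 <- box a) \sum_(c1 <- box c) f a1 c1 * g (subm a a1) (subm c c1).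

Definition dT1 (f : ps K) : ps K := fun a c =>
  (nth 0 a 0).+1%:R * f (incr_nth a 0) c.
Definition dTb1 (f : ps K) : ps K := fun a c =>
  (nth 0 c 0).+1%:R * f a (incr_nth c 0).

(* Hirota derivatives:  D_x f.g = f_x g - f g_x ;
   D_x D_y f.g = d_u d_v (f(x+u,y+v) g(x-u,y-v))|_{u=v=0}
               = f_xy g - f_x g_y - f_y g_x + f g_xy *)
Definition hirota1 (D : ps K -> ps K) (f g : ps K) : ps K := fun a c =>
  mulps (D f) g a c - mulps f (D g) a c.
Definition hirota2 (D1 D2 : ps K -> ps K) (f g : ps K) : ps K := fun a c =>
  mulps (D1 (D2 f)) g a c - mulps (D1 f) (D2 g) a c
  - mulps (D2 f) (D1 g) a c + mulps f (D1 (D2 g)) a c.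

(* coefficient of u^b t^a in F(t+u) (per unit coefficient), where
   u = eps [w], i.e. u_{i+1} = eps w^{i+1}/(i+1), w-power omitted *)
Definition shiftc (eps : K) (a b : mono) : K :=
  \prod_(i < size b)
     ('C(nth 0 a i + nth 0 b i, nth 0 b i)%:R * (eps / (i.+1)%:R) ^+ nth 0 b i).

(* coefficient of w^n t^a tbar^c in F(t + eps[w], tbar) *)
Definition shT (F : ps K) (eps : K) (n : nat) (a c : mono) : K :=
  \sum_(b <- wts n) F (addm a b) c * shiftc eps a b.
(* coefficient of w^n t^a tbar^c in F(t, tbar + eps[w]) *)
Definition shTb (F : ps K) (eps : K) (n : nat) (a c : mono) : K :=
  \sum_(b <- wts n) F a (addm c b) * shiftc eps c b.

(* coefficient of x^a1 x'^b1 in exp(xi(sig (x'-x), w)), w-power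
   (of weighted degree wt a1 + wt b1) omitted *)
Definition expc (sig : K) (a1 b1 : mono) : K :=
  (\prod_(i < size a1) ((- sig) ^+ nth 0 a1 i / (nth 0 a1 i)`!%:R))
  * (\prod_(i < size b1) (sig ^+ nth 0 b1 i / (nth 0 b1 i)`!%:R)).

Definition resid (N : int) (f g : nat -> K) : K :=
  match N with
  | Posz n => \sum_(k < n.+1) f k * g (n - k)%N
  | Negz _ => 0
  end.

(* Coefficient of t^a t'^b tbar^c tbar'^d in
   oint dz/2pi i  z^m e^{xi(sig(t'-t),z)} F(t' - sig[z^-1], tbar') G(t + sig[z^-1], tbar)
   (integrand expanded at z = infinity) *)
Definition lhsTerm (m : int) (sig : K) (F G : ps K) (a b c d : mono) : K :=
  \sum_(a1 <- box a) \sum_(b1 <- box b)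
    expc sig a1 b1 *
    resid (m + (wt a1 + wt b1)%N%:Z + 1)
      (fun k => shT F (- sig) k (subm b b1) d)
      (fun l => shT G sig l (subm a a1) c).

(* Coefficient of t^a t'^b tbar^c tbar'^d in
   oint dz/2pi i  z^p e^{xi(sig(tbar'-tbar),z^-1)} F(t', tbar' - sig[z]) G(t, tbar + sig[z])
   (integrand expanded at z = 0) *)
Definition rhsTerm (p : int) (sig : K) (F G : ps K) (a b c d : mono) : K :=
  \sum_(c1 <- box c) \sum_(d1 <- box d)
    expc sig c1 d1 *
    resid ((wt c1 + wt d1)%N%:Z - p - 1)
      (fun k => shTb F (- sig) k b (subm d d1))
      (fun l => shTb G sig l a (subm c c1)).

End Ops.

(* The Pfaff-Toda bilinear identity, as an identity of formal series in
   (t, t', tbar, tbar'), coefficient of t^a t'^b tbar^c tbar'^d. *)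
Definition PT_bilinear (K : numFieldType)
  (T : int -> int -> (nat -> nat) -> (nat -> nat) -> K) : Prop :=
  forall (s r s' r' : int) (a b c d : mono),
    lhsTerm (s' + r' - s - r) 1 (tps T s' r') (tps T s r) a b c d
    + lhsTerm (s + r - s' - r' - 4) (-1) (tps T (s' + 1) (r' + 1)) (tps T (s - 1) (r - 1)) a b c d
    = rhsTerm (s' - r' - s + r) 1 (tps T (s' + 1) r') (tps T (s - 1) r) a b c d
    + rhsTerm (s - r - s' + r') (-1) (tps T s' (r' + 1)) (tps T s (r - 1)) a b c d.

(* tau function of the Pfaff-Toda hierarchy: nonvanishing (constant term
   nonzero, the formal analogue) and the bilinear identity. *)
Definition PT_tau (K : numFieldType)
  (T : int -> int -> (nat -> nat) -> (nat -> nat) -> K) : Prop :=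
  (forall s r : int, T s r (fun _ => 0%N) (fun _ => 0%N) != 0) /\ PT_bilinear T.

From HB Require Import structures.
From mathcomp Require Import all_boot all_order all_algebra.
From mathcomp Require Import zify ring.
From Stdlib Require Import FunctionalExtensionality.
Import Order.TTheory GRing.Theory Num.Theory.
Local Open Scope ring_scope.

(* Equations in (t, tbar) alone are obtained on the
   diagonal t' = t, tbar' = tbar, whose coefficient of t^e tbar^g is the sum
   over b <= e, d <= g of the coefficient at (e - b, b, g - d, d).
   - On the diagonal the factor exp(xi(sig (t' - t), z)) of each contour
     integral collapses to 1, because exp(-sig x) exp(sig x) = 1 coefficientwise
     ([collapse]); applying d/dt'_1 before restricting leaves exactly one extra
     term, sig z ([collapse_d1]).
   - What remains of each integral is a residue sum_{k+l=N} of coefficients of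
     the shifted series F(t - sig[w]) G(t + sig[w]) ([diagL], [diagR]).  It
     vanishes for N < 0, and for N = 0, 1 only shifts of weight <= 1 enter, which
     produce a product or a first-order Hirota derivative.
   - The restricted identity at (s', r') = (s, r) with (s, r) replaced by
     (s + 1, r - 1) gives the second equation; the t'_1-derivative at
     (s', r') = (s - 1, r) with (s, r) replaced by (s + 1, r) gives the first. *)

Lemma mkseq_cons (T : Type) (f : nat -> T) n :
  mkseq f n.+1 = f 0%N :: mkseq (fun i => f i.+1) n.
Proof. by rewrite /mkseq /= -[1%N]addn0 iotaDl -map_comp. Qed.

Lemma subm_cons x a i b : subm (x :: a) (i :: b) = (x - i)%N :: subm a b.
Proof. by rewrite /subm /= mkseq_cons. Qed.

Lemma addm_cons x a i b : addm (x :: a) (i :: b) = (x + i)%N :: addm a b.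
Proof. by rewrite /addm /= maxnSS mkseq_cons. Qed.

Lemma addm0 a : addm a [::] = a.
Proof.
rewrite /addm maxn0 -[RHS](mkseq_nth 0%N); apply: eq_mkseq => i.
by rewrite nth_nil addn0.
Qed.

Lemma addm_unit a : addm a [:: 1%N] = incr_nth a 0.
Proof. by case: a => [|x a] //; rewrite addm_cons addm0 addn1. Qed.

Lemma wt_pad a n : (size a <= n)%N -> wt a = (\sum_(i < n) i.+1 * nth 0 a i)%N.
Proof.
move=> le_an; rewrite /wt (big_ord_widen n (fun i => i.+1 * nth 0 a i)%N le_an).
rewrite big_mkcond /=; apply: eq_bigr => i _.
by case: ltnP => // le_ai; rewrite nth_default // muln0.
Qed.

Lemma wt_addm a b : wt (addm a b) = (wt a + wt b)%N.
Proof.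
set n := maxn (size a) (size b).
rewrite (@wt_pad (addm a b) n); last by rewrite size_mkseq.
rewrite (@wt_pad a n) ?leq_maxl // (@wt_pad b n) ?leq_maxr // -big_split /=.
by apply: eq_bigr => i _; rewrite nth_mkseq // mulnDr.
Qed.

Lemma wt_zeros n : wt (nseq n 0%N) = 0%N.
Proof. by rewrite /wt big1 // => i _; rewrite nth_nseq if_same muln0. Qed.

Lemma wt_unit n : wt (1%N :: nseq n 0%N) = 1%N.
Proof.
by rewrite /wt big_ord_recl big1 ?addn0 // => i _; rewrite /= nth_nseq if_same muln0.
Qed.

(* The monomials of weight 0 and 1: shifts by [w] of order <= 1 involve only
   the constant term and t_1. *)
Lemma wts0 : wts 0 = [:: [::]].
Proof. by rewrite /wts /= /wt big_ord0. Qed.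

Lemma wts1 : wts 1 = [:: [:: 1%N]].
Proof. by rewrite /wts /= /wt !big_ord1. Qed.

Section FiniteSums.
Context {V : nmodType}.

Lemma big_box_cons x a (F : mono -> V) :
  \sum_(b <- box (x :: a)) F b = \sum_(i < x.+1) \sum_(b <- box a) F ((i : nat) :: b).
Proof.
have -> : box (x :: a) = [seq i :: b | i <- iota 0 x.+1, b <- box a] by [].
rewrite -(big_mkord xpredT (fun i => \sum_(b <- box a) F (i :: b))).
by rewrite big_allpairs_dep /index_iota subn0.
Qed.

Lemma sum_antidiag_rev j (R : nat -> nat -> V) :
  \sum_(k < j.+1) R k (j - k)%N = \sum_(q < j.+1) R (j - q)%N q.
Proof.
rewrite (reindex_inj rev_ord_inj) /=; apply: eq_bigr => k _.
by rewrite subSS subKn // -ltnS.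
Qed.

Lemma box_swap a (h : mono -> mono -> V) :
  \sum_(a1 <- box a) h a1 (subm a a1) = \sum_(a1 <- box a) h (subm a a1) a1.
Proof.
elim: a h => [|x a IH] h; first by rewrite /= !big_seq1.
rewrite !big_box_cons.
under eq_bigr => i _ do under eq_bigr => b _ do rewrite subm_cons.
rewrite (sum_antidiag_rev x (fun i j => \sum_(b <- box a) h (i :: b) (j :: subm a b))).
apply: eq_bigr => q _.
rewrite (IH (fun u v => h ((x - q)%N :: u) ((q : nat) :: v))).
by apply: eq_bigr => b _; rewrite subm_cons.
Qed.

Lemma sum_triangle N (F : nat -> nat -> V) :
  \sum_(j < N.+1) \sum_(k < j.+1) F k (j - k)%N
  = \sum_(k < N.+1) \sum_(q < (N - k).+1) F k q.
Proof.
elim: N => [|N IH]; first by rewrite !big_ord1.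
rewrite (big_ord_recr N.+1) /= IH [RHS](big_ord_recr N.+1) /= subnn big_ord1.
rewrite (big_ord_recr N.+1 (fun k => F _ _)) /= subnn addrA; congr (_ + _).
rewrite -big_split /=; apply: eq_bigr => k _.
have le_kN : (k <= N)%N by rewrite -ltnS.
by rewrite subSn // [RHS]big_ord_recr.
Qed.

Lemma sum_triangle_swap N (R : nat -> nat -> V) :
  \sum_(k < N.+1) \sum_(q < (N - k).+1) R k q
  = \sum_(q < N.+1) \sum_(k < (N - q).+1) R k q.
Proof.
rewrite -sum_triangle -(sum_triangle N (fun q k => R k q)).
by apply: eq_bigr => j _; exact: sum_antidiag_rev.
Qed.

(* The same regrouping for the simplex {i + k + q + p = N}: sum over
   (j = k + q, i) versus (q, n = i + k). *)
Lemma sum_simplex3 N (h : nat -> nat -> nat -> nat -> V) :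
  \sum_(j < N.+1) \sum_(i < (N - j).+1) \sum_(k < j.+1) h i k (j - k)%N (N - j - i)%N
  = \sum_(q < N.+1) \sum_(n < (N - q).+1) \sum_(k < n.+1) h (n - k)%N k q (N - q - n)%N.
Proof.
pose P k q := \sum_(i < (N - (k + q)).+1) h i k q (N - (k + q) - i)%N.
transitivity (\sum_(j < N.+1) \sum_(k < j.+1) P k (j - k)%N).
  apply: eq_bigr => j _; rewrite exchange_big /=; apply: eq_bigr => k _.
  by rewrite /P subnKC // -ltnS.
rewrite sum_triangle sum_triangle_swap; apply: eq_bigr => q _.
pose Q k i := h i k q (N - q - (k + i))%N.
transitivity (\sum_(n < (N - q).+1) \sum_(k < n.+1) Q k (n - k)%N); last first.
  by apply: eq_bigr => n _; apply: eq_bigr => k _; rewrite /Q subnKC // -ltnS.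
rewrite (sum_triangle (N - q) Q); apply: eq_bigr => k _ /=.
rewrite /P /Q addnC subnDA.
by apply: eq_bigr => i _; rewrite !subnDA.
Qed.

End FiniteSums.

Section ExponentialCoefficients.
Context {K : numFieldType}.
Implicit Types (sg : K) (n k : nat).

Definition expcoef sg n : K := sg ^+ n / (n`!)%:R.

Lemma fact_neq0 n : (n`!)%:R != 0 :> K.
Proof. by rewrite pnatr_eq0 -lt0n fact_gt0. Qed.

Lemma expcoefD a b n :
  \sum_(k < n.+1) expcoef a (n - k) * expcoef b k = expcoef (a + b) n.
Proof.
rewrite /expcoef exprDn mulr_suml; apply: eq_bigr => k _.
have le_kn : (k <= n)%N by rewrite -ltnS.
have fact_n : (n`!)%:R = 'C(n, k)%:R * ((k`!)%:R * ((n - k)`!)%:R) :> K.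
  by rewrite -(bin_fact le_kn) !natrM.
have binom_neq0 : 'C(n, k)%:R != 0 :> K by rewrite pnatr_eq0 -lt0n bin_gt0.
rewrite fact_n -mulr_natr.
by field; rewrite binom_neq0 !fact_neq0.
Qed.

Lemma expcoef0 n : expcoef 0 n = (n == 0%N)%:R.
Proof. by rewrite /expcoef expr0n; case: n => [|n] /=; rewrite ?mul0r ?divr1. Qed.

Lemma expcoef_cancel sg n :
  \sum_(k < n.+1) expcoef (- sg) (n - k) * expcoef sg k = (n == 0%N)%:R.
Proof. by rewrite expcoefD addNr expcoef0. Qed.

Lemma expcoefS sg k : expcoef sg k.+1 * (k.+1)%:R = sg * expcoef sg k.
Proof. by rewrite /expcoef factS natrM exprS; field; rewrite fact_neq0 nat1r pnatr_eq0. Qed.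

Lemma expcoef_cancel_d1 sg n :
  \sum_(k < n.+1) expcoef (- sg) (n - k) * expcoef sg k * k%:R = sg * (n == 1%N)%:R.
Proof.
case: n => [|n]; first by rewrite big_ord1 !mulr0.
rewrite big_ord_recl mulr0 add0r -[_ == _]/(n == 0%N) -(expcoef_cancel sg n) mulr_sumr.
by apply: eq_bigr => k _; rewrite subSS -mulrA expcoefS mulrCA.
Qed.

End ExponentialCoefficients.

(* Collapse of exp(sig (x' - x)) in one pair of variables (x, x') on the
   diagonal x' = x: only the exponent 0 survives, and after x'-differentiation
   also the exponent 1 with factor sig. *)
Section CoordinateCollapse.
Context {K : numFieldType}.
Implicit Types (sg : K) (N : nat).

Lemma sum_at0 M (W : nat -> K) :
  \sum_(n < M.+1) ((n : nat) == 0%N)%:R * W n = W 0%N.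
Proof. by rewrite big_ord_recl mul1r big1 ?addr0 // => i _; rewrite mul0r. Qed.

Lemma sum_at1 M (W : nat -> K) :
  \sum_(n < M.+1) ((n : nat) == 1%N)%:R * W n = if M is 0 then 0 else W 1%N.
Proof.
case: M => [|M]; first by rewrite big_ord1 mul0r.
rewrite big_ord_recl mul0r add0r big_ord_recl mul1r big1 ?addr0 // => i _.
by rewrite mul0r.
Qed.

(* The degree-N part of exp(sig (x' - x)) Y on the diagonal x' = x, where
   Z n p q is the coefficient of x^p x'^q of Y paired with the exponential's
   terms of total degree n (degree i in x, k in x'): only n = 0 survives. *)
Lemma collapse_coord sg N (Z : nat -> nat -> nat -> K) :
  \sum_(j < N.+1) \sum_(i < (N - j).+1) \sum_(k < j.+1)
     (expcoef (- sg) i * expcoef sg k * Z (i + k)%N (N - j - i)%N (j - k)%N)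
  = \sum_(q < N.+1) Z 0%N (N - q)%N q.
Proof.
rewrite (sum_simplex3 N (fun i k q p => expcoef (- sg) i * expcoef sg k * Z (i + k)%N p q)).
apply: eq_bigr => q _.
transitivity (\sum_(n < (N - q).+1) ((n : nat) == 0%N)%:R * Z n (N - q - n)%N q);
  last by rewrite (sum_at0 _ (fun n => Z n (N - q - n)%N q)) subn0.
apply: eq_bigr => n _; rewrite -(expcoef_cancel sg n) big_distrl /=.
by apply: eq_bigr => k _; rewrite subnK // -ltnS.
Qed.

Lemma collapse_fiber_d1 sg q M (W : nat -> K) :
  \sum_(n < M.+1) \sum_(k < n.+1)
     (q + k)%:R * (expcoef (- sg) (n - k) * expcoef sg k * W n)
  = q%:R * W 0%N + sg * (if M is 0 then 0 else W 1%N).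
Proof.
transitivity (\sum_(n < M.+1)
    (q%:R * (((n : nat) == 0%N)%:R * W n) + sg * ((n : nat) == 1%N)%:R * W n)).
  apply: eq_bigr => n _.
  rewrite -(expcoef_cancel sg n) -(expcoef_cancel_d1 sg n) !mulr_suml mulr_sumr.
  by rewrite -big_split; apply: eq_bigr => k _; rewrite /= natrD; ring.
by rewrite big_split -big_distrr sum_at0 /=; under eq_bigr do rewrite -mulrA;
  rewrite -big_distrr sum_at1.
Qed.

(* The same after weighting by the x'-degree j (that is, x' d/dx'). *)
Lemma collapse_coord_d1 sg N (Z : nat -> nat -> nat -> K) :
  \sum_(j < N.+1) \sum_(i < (N - j).+1) \sum_(k < j.+1)
     (j%:R * (expcoef (- sg) i * expcoef sg k * Z (i + k)%N (N - j - i)%N (j - k)%N))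
  = \sum_(q < N.+1) q%:R * Z 0%N (N - q)%N q
    + sg * \sum_(q < N) Z 1%N (N - q - 1)%N q.
Proof.
pose h i k q p := (q + k)%:R * (expcoef (- sg) i * expcoef sg k * Z (i + k)%N p q).
transitivity (\sum_(j < N.+1) \sum_(i < (N - j).+1) \sum_(k < j.+1)
                h i k (j - k)%N (N - j - i)%N).
  apply: eq_bigr => j _; apply: eq_bigr => i _; apply: eq_bigr => k _.
  by rewrite /h subnK // -ltnS.
rewrite (sum_simplex3 N h).
have -> : \sum_(q < N) Z 1%N (N - q - 1)%N q
    = \sum_(q < N.+1) (if (N - q)%N is 0 then 0 else Z 1%N (N - q - 1)%N q).
  rewrite big_ord_recr /= subnn addr0; apply: eq_bigr => q _.
  have : (0 < N - q)%N by rewrite subn_gt0.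
  by case: (N - q)%N.
rewrite big_distrr -big_split /=; apply: eq_bigr => q _.
pose W n := Z n (N - q - n)%N q.
transitivity (q%:R * W 0%N + sg * (if (N - q)%N is 0 then 0 else W 1%N)); last first.
  by rewrite /W subn0; case: (N - q)%N => [|m] //=; rewrite subn1.
rewrite -collapse_fiber_d1; apply: eq_bigr => n _; apply: eq_bigr => k _.
by rewrite /h subnK // -ltnS.
Qed.

End CoordinateCollapse.

(* Collapse of exp(xi(sig (t' - t), z)) in all variables at once.  [expc]
   gives its coefficients; the z-power is tracked by the first argument of X. *)
Section DiagonalCollapse.
Context {K : numFieldType}.
Implicit Types (sg : K) (N : nat).

Lemma expc_nil sg : expc sg [::] [::] = 1.
Proof. by rewrite /expc !big_ord0 mulr1. Qed.

Lemma expc_cons sg i a j b :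
  expc sg (i :: a) (j :: b) = expcoef (- sg) i * expcoef sg j * expc sg a b.
Proof. by rewrite /expc /= !big_ord_recl /= mulrACA. Qed.

(* On the diagonal t' = t, exp(xi(sig (t' - t), z)) times any series X
   reduces to the terms of X with zero exponential part. *)
Definition collapses sg e := forall X : mono -> mono -> mono -> K,
  \sum_(b <- box e) \sum_(a1 <- box (subm e b)) \sum_(b1 <- box b)
     expc sg a1 b1 * X (addm a1 b1) (subm (subm e b) a1) (subm b b1)
  = \sum_(b <- box e) X (nseq (size e) 0%N) (subm e b) b.

Lemma collapse_head sg N e j (X : mono -> mono -> mono -> K) : collapses sg e ->
  \sum_(b <- box e) \sum_(a1 <- box (subm (N :: e) (j :: b)))
     \sum_(b1 <- box (j :: b))
       expc sg a1 b1 * X (addm a1 b1) (subm (subm (N :: e) (j :: b)) a1) (subm (j :: b) b1)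
  = \sum_(i < (N - j).+1) \sum_(k < j.+1) expcoef (- sg) i * expcoef sg k *
      \sum_(b <- box e) X ((i + k)%N :: nseq (size e) 0%N) ((N - j - i)%N :: subm e b)
          ((j - k)%N :: b).
Proof.
move=> collapse_e.
transitivity (\sum_(b <- box e) \sum_(i < (N - j).+1) \sum_(a1 <- box (subm e b))
   \sum_(k < j.+1) \sum_(b1 <- box b)
   (expcoef (- sg) i * expcoef sg k) * (expc sg a1 b1 *
     X ((i + k)%N :: addm a1 b1) ((N - j - i)%N :: subm (subm e b) a1)
       ((j - k)%N :: subm b b1))).
  apply: eq_bigr => b _; rewrite subm_cons big_box_cons; apply: eq_bigr => i _.
  apply: eq_bigr => a1 _; rewrite big_box_cons; apply: eq_bigr => k _.
  apply: eq_bigr => b1 _.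
  by rewrite expc_cons addm_cons !subm_cons mulrA.
rewrite exchange_big /=; apply: eq_bigr => i _.
under eq_bigr => b _ do rewrite exchange_big /=.
rewrite exchange_big /=; apply: eq_bigr => k _.
rewrite -(collapse_e (fun f a b => X ((i + k)%N :: f) ((N - j - i)%N :: a) ((j - k)%N :: b))).
rewrite big_distrr; apply: eq_bigr => b _.
rewrite big_distrr; apply: eq_bigr => a1 _.
by rewrite big_distrr.
Qed.

Lemma collapse sg e : collapses sg e.
Proof.
elim: e => [|x e IH] X; first by rewrite /= !big_seq1 expc_nil mul1r addm0.
rewrite [LHS]big_box_cons [RHS]big_box_cons.
under eq_bigr => j _ do rewrite (collapse_head _ _ _ _ _ IH).
rewrite (collapse_coord sg x
  (fun n p q => \sum_(b <- box e) X (n :: nseq (size e) 0%N) (p :: subm e b) (q :: b))).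
by apply: eq_bigr => i _; apply: eq_bigr => b _; rewrite subm_cons.
Qed.

(* Differentiating in t'_1 before restricting leaves one extra term: the
   exponential contributes sig z, i.e. the degree vector (1, 0, ..., 0). *)
Lemma collapse_d1 sg x e (X : mono -> mono -> mono -> K) :
  \sum_(b <- box (x.+1 :: e)) (nth 0 b 0)%:R *
    (\sum_(a1 <- box (subm (x.+1 :: e) b)) \sum_(b1 <- box b)
     expc sg a1 b1 * X (addm a1 b1) (subm (subm (x.+1 :: e) b) a1) (subm b b1))
  = \sum_(b <- box (x.+1 :: e)) (nth 0 b 0)%:R * X (nseq (size e).+1 0%N) (subm (x.+1 :: e) b) b
    + sg * \sum_(b <- box (x :: e)) X (1%N :: nseq (size e) 0%N) (subm (x :: e) b) b.
Proof.
rewrite [LHS]big_box_cons [X in _ = X + _]big_box_cons [X in _ = _ + _ * X]big_box_cons.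
pose Z n p q := \sum_(b <- box e) X (n :: nseq (size e) 0%N) (p :: subm e b) (q :: b).
transitivity (\sum_(j < x.+2) \sum_(i < (x.+1 - j).+1) \sum_(k < j.+1)
   (j%:R * (expcoef (- sg) i * expcoef sg k * Z (i + k)%N (x.+1 - j - i)%N (j - k)%N)));
  last first.
  rewrite (collapse_coord_d1 sg x.+1 Z); congr (_ + _).
    apply: eq_bigr => q _; rewrite /Z big_distrr; apply: eq_bigr => b _.
    by rewrite subm_cons.
  congr (_ * _); apply: eq_bigr => q _; apply: eq_bigr => b _.
  by rewrite subm_cons subnAC subn1.
apply: eq_bigr => j _; rewrite -big_distrr (collapse_head _ _ _ _ _ (collapse sg e)).
by rewrite big_distrr; apply: eq_bigr => i _; rewrite big_distrr.
Qed.

End DiagonalCollapse.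

Section Residues.
Context {K : numFieldType}.
Implicit Types (F G : ps K) (f g : nat -> K).

Lemma resid_neg (N : int) f g : N < 0 -> resid N f g = 0.
Proof. by case: N. Qed.

Lemma resid0 f g : resid 0 f g = f 0%N * g 0%N.
Proof. by rewrite /resid /= big_ord1. Qed.

Lemma resid1 f g : resid 1 f g = f 0%N * g 1%N + f 1%N * g 0%N.
Proof. by rewrite /resid /= big_ord_recl big_ord1. Qed.

Lemma shT0 F eps a c : shT F eps 0 a c = F a c.
Proof. by rewrite /shT wts0 big_seq1 addm0 /shiftc big_ord0 mulr1. Qed.

Lemma shT1 F eps a c : shT F eps 1 a c = F (incr_nth a 0) c * ((nth 0 a 0).+1%:R * eps).
Proof. by rewrite /shT wts1 big_seq1 addm_unit /shiftc big_ord1 /= addn1 bin1 divr1. Qed.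

Lemma shTb0 F eps a c : shTb F eps 0 a c = F a c.
Proof. by rewrite /shTb wts0 big_seq1 addm0 /shiftc big_ord0 mulr1. Qed.

Lemma shTb1 F eps a c : shTb F eps 1 a c = F a (incr_nth c 0) * ((nth 0 c 0).+1%:R * eps).
Proof. by rewrite /shTb wts1 big_seq1 addm_unit /shiftc big_ord1 /= addn1 bin1 divr1. Qed.

End Residues.

Section Products.
Context {K : numFieldType}.
Implicit Types (F G : ps K).

Lemma mulpsC F G a c : mulps F G a c = mulps G F a c.
Proof.
rewrite /mulps (box_swap a (fun u v => \sum_(c1 <- box c) F u c1 * G v (subm c c1))) /=.
apply: eq_bigr => a1 _; rewrite (box_swap c (fun u v => F (subm a a1) u * G a1 v)) /=.
by apply: eq_bigr => c1 _; rewrite mulrC.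
Qed.

Lemma hirota1_antisym (D : ps K -> ps K) F G a c :
  hirota1 D F G a c = - hirota1 D G F a c.
Proof. by rewrite /hirota1 (mulpsC (D F)) (mulpsC F) opprB. Qed.

Lemma hirota2_self F a c :
  hirota2 (@dT1 K) (@dTb1 K) F F a c
  = 2%:R * (mulps (dT1 (dTb1 F)) F a c - mulps (dT1 F) (dTb1 F) a c).
Proof.
rewrite /hirota2 (mulpsC (dTb1 F)) (mulpsC F (dT1 (dTb1 F))).
by rewrite mulr_natl mulr2n addrA addrAC.
Qed.

End Products.

Section DiagonalRestriction.
Context {K : numFieldType}.
Implicit Types (sg : K) (F G : ps K) (N m p : int).

(* Coefficient of t^e tbar^g of the residue sum_{k+l=N} of
   [w^k] F(t - sg[w], tbar) [w^l] G(t + sg[w], tbar): the left integrals on the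
   diagonal, once the exponential has collapsed. *)
Definition diagL N sg F G (e g : mono) : K :=
  \sum_(b <- box e) \sum_(d <- box g)
    resid N (fun k => shT F (- sg) k b d) (fun l => shT G sg l (subm e b) (subm g d)).

(* The same with shifts in tbar: the right integrals on the diagonal. *)
Definition diagR N sg F G (e g : mono) : K :=
  \sum_(b <- box e) \sum_(d <- box g)
    resid N (fun k => shTb F (- sg) k b d) (fun l => shTb G sg l (subm e b) (subm g d)).

(* The right residue after d/dt'_1 and restriction to the diagonal. *)
Definition diagRd1 N sg F G (e g : mono) : K :=
  \sum_(b <- box e) (nth 0 b 0).+1%:R * \sum_(d <- box g)
    resid N (fun k => shTb F (- sg) k (incr_nth b 0) d)
      (fun l => shTb G sg l (subm e b) (subm g d)).

Lemma lhs_diag m sg F G e g :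
  \sum_(b <- box e) \sum_(d <- box g) lhsTerm m sg F G (subm e b) b (subm g d) d
  = diagL (m + 1) sg F G e g.
Proof.
rewrite /diagL exchange_big [RHS]exchange_big /=; apply: eq_bigr => d _.
pose X f a b := resid (m + (wt f)%:Z + 1)
  (fun k => shT F (- sg) k b d) (fun l => shT G sg l a (subm g d)).
transitivity (\sum_(b <- box e) \sum_(a1 <- box (subm e b)) \sum_(b1 <- box b)
   expc sg a1 b1 * X (addm a1 b1) (subm (subm e b) a1) (subm b b1)).
  apply: eq_bigr => b _; apply: eq_bigr => a1 _; apply: eq_bigr => b1 _.
  by rewrite /X wt_addm.
by rewrite collapse; apply: eq_bigr => b _; rewrite /X wt_zeros addr0.
Qed.

Lemma rhs_diag_t p sg F G a b g :
  \sum_(d <- box g) rhsTerm p sg F G a b (subm g d) d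
  = \sum_(d <- box g)
      resid (- p - 1) (fun k => shTb F (- sg) k b d) (fun l => shTb G sg l a (subm g d)).
Proof.
pose X f c d := resid ((wt f)%:Z - p - 1)
  (fun k => shTb F (- sg) k b d) (fun l => shTb G sg l a c).
transitivity (\sum_(d <- box g) \sum_(c1 <- box (subm g d)) \sum_(d1 <- box d)
   expc sg c1 d1 * X (addm c1 d1) (subm (subm g d) c1) (subm d d1)).
  apply: eq_bigr => d _; apply: eq_bigr => c1 _; apply: eq_bigr => d1 _.
  by rewrite /X wt_addm.
by rewrite collapse; apply: eq_bigr => d _; rewrite /X wt_zeros sub0r.
Qed.

Lemma rhs_diag p sg F G e g :
  \sum_(b <- box e) \sum_(d <- box g) rhsTerm p sg F G (subm e b) b (subm g d) d
  = diagR (- p - 1) sg F G e g.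
Proof. by apply: eq_bigr => b _; rewrite rhs_diag_t. Qed.

(* The t'_1-derivative of a left integral on the diagonal; the collapsed
   part vanishes for m + 1 < 0, leaving the term sig z. *)
Lemma lhs_diag_d1 m sg F G x e g : m + 1 < 0 ->
  \sum_(b <- box (x.+1 :: e)) (nth 0 b 0)%:R *
     \sum_(d <- box g) lhsTerm m sg F G (subm (x.+1 :: e) b) b (subm g d) d
  = sg * diagL (m + 1 + 1) sg F G (x :: e) g.
Proof.
move=> m_neg; under eq_bigr => b _ do rewrite big_distrr.
rewrite exchange_big /diagL [in RHS]exchange_big big_distrr; apply: eq_bigr => d _.
pose X f a b := resid (m + (wt f)%:Z + 1)
  (fun k => shT F (- sg) k b d) (fun l => shT G sg l a (subm g d)).
transitivity (\sum_(b <- box (x.+1 :: e)) (nth 0 b 0)%:R *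
   (\sum_(a1 <- box (subm (x.+1 :: e) b)) \sum_(b1 <- box b)
   expc sg a1 b1 * X (addm a1 b1) (subm (subm (x.+1 :: e) b) a1) (subm b b1))).
  apply: eq_bigr => b _; congr (_ * _); apply: eq_bigr => a1 _; apply: eq_bigr => b1 _.
  by rewrite /X wt_addm.
rewrite collapse_d1 big1 ?add0r => [|b _]; last first.
  by rewrite /X wt_zeros addr0 resid_neg ?mulr0.
by congr (_ * _); apply: eq_bigr => b _; rewrite /X wt_unit.
Qed.

(* Coefficient extraction of d/dt'_1: only b with b_0 >= 1 contribute. *)
Lemma sum_box_weight_head x e (W : mono -> mono -> K) :
  \sum_(b <- box (x.+1 :: e)) (nth 0 b 0)%:R * W b (subm (x.+1 :: e) b)
  = \sum_(b <- box (x :: e)) (nth 0 b 0).+1%:R * W (incr_nth b 0) (subm (x :: e) b).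
Proof.
rewrite !big_box_cons big_ord_recl /= big1 ?add0r => [|b _]; last by rewrite mul0r.
by apply: eq_bigr => i _; apply: eq_bigr => b _; rewrite !subm_cons.
Qed.

Lemma rhs_diag_d1 p sg F G x e g :
  \sum_(b <- box (x.+1 :: e)) (nth 0 b 0)%:R *
     \sum_(d <- box g) rhsTerm p sg F G (subm (x.+1 :: e) b) b (subm g d) d
  = diagRd1 (- p - 1) sg F G (x :: e) g.
Proof.
under eq_bigr => b _ do rewrite rhs_diag_t.
exact: (sum_box_weight_head x e (fun b a => \sum_(d <- box g)
  resid (- p - 1) (fun k => shTb F (- sg) k b d) (fun l => shTb G sg l a (subm g d)))).
Qed.

Lemma diagL_neg N sg F G e g : N < 0 -> diagL N sg F G e g = 0.
Proof. by move=> N_neg; rewrite /diagL big1 // => b _; rewrite big1 // => d _; rewrite resid_neg. Qed.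

Lemma diagR_neg N sg F G e g : N < 0 -> diagR N sg F G e g = 0.
Proof. by move=> N_neg; rewrite /diagR big1 // => b _; rewrite big1 // => d _; rewrite resid_neg. Qed.

Lemma diagRd1_neg N sg F G e g : N < 0 -> diagRd1 N sg F G e g = 0.
Proof.
move=> N_neg; rewrite /diagRd1 big1 // => b _.
by rewrite big1 ?mulr0 // => d _; rewrite resid_neg.
Qed.

Lemma diagL_at0 N sg F G e g : N = 0 -> diagL N sg F G e g = mulps F G e g.
Proof.
by move=> ->; apply: eq_bigr => b _; apply: eq_bigr => d _; rewrite resid0 !shT0.
Qed.

Lemma diagL_at1 N F G e g : N = 1 -> diagL N 1 F G e g = - hirota1 (@dT1 K) F G e g.
Proof.
move=> ->; rewrite /hirota1 /mulps opprB -sumrB; apply: eq_bigr => b _.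
by rewrite -sumrB; apply: eq_bigr => d _; rewrite resid1 !shT0 !shT1 /dT1 /=; ring.
Qed.

Lemma diagR_at1 N F G e g : N = 1 -> diagR N 1 F G e g = - hirota1 (@dTb1 K) F G e g.
Proof.
move=> ->; rewrite /hirota1 /mulps opprB -sumrB; apply: eq_bigr => b _.
by rewrite -sumrB; apply: eq_bigr => d _; rewrite resid1 !shTb0 !shTb1 /dTb1 /=; ring.
Qed.

Lemma diagRd1_at1 N F G e g : N = 1 ->
  diagRd1 N 1 F G e g
  = mulps (@dT1 K F) (@dTb1 K G) e g - mulps (@dT1 K (@dTb1 K F)) G e g.
Proof.
move=> ->; rewrite /mulps -sumrB; apply: eq_bigr => b _.
rewrite -sumrB mulr_sumr; apply: eq_bigr => d _.
by rewrite resid1 !shTb0 !shTb1 /dT1 /dTb1 /=; ring.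
Qed.

End DiagonalRestriction.

(* Trailing zero exponents are irrelevant for the series built from tau. *)
Section PadZero.
Context {K : numFieldType}.

Definition pad0_invariant (X : ps K) := forall c, X [::] c = X [:: 0%N] c.

Lemma tps_pad0 (T : int -> int -> (nat -> nat) -> (nat -> nat) -> K) s r :
  pad0_invariant (tps T s r).
Proof.
move=> c; rewrite /tps; congr (T s r _ _); apply: functional_extensionality => i.
by rewrite nth_nil; case: i => [|[|i]].
Qed.

Lemma dT1_pad0 (X : ps K) : pad0_invariant (@dT1 K X).
Proof. by []. Qed.

Lemma dTb1_pad0 (X : ps K) : pad0_invariant X -> pad0_invariant (@dTb1 K X).
Proof. by move=> X_pad c; rewrite /dTb1 X_pad. Qed.

Lemma mulps_pad0 (X Y : ps K) c : pad0_invariant X -> pad0_invariant Y ->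
  mulps X Y [::] c = mulps X Y [:: 0%N] c.
Proof.
move=> X_pad Y_pad; rewrite /mulps /= !big_seq1; apply: eq_bigr => c1 _.
by rewrite X_pad Y_pad.
Qed.

End PadZero.

Section HirotaEquations.
Context {K : numFieldType} (T : int -> int -> (nat -> nat) -> (nat -> nat) -> K).
Hypothesis bilinear : PT_bilinear T.

Lemma bilinear_diag s r s' r' e g :
  diagL (s' + r' - s - r + 1) 1 (tps T s' r') (tps T s r) e g
  + diagL (s + r - s' - r' - 4 + 1) (-1) (tps T (s' + 1) (r' + 1)) (tps T (s - 1) (r - 1)) e g
  = diagR (- (s' - r' - s + r) - 1) 1 (tps T (s' + 1) r') (tps T (s - 1) r) e g
  + diagR (- (s - r - s' + r') - 1) (-1) (tps T s' (r' + 1)) (tps T s (r - 1)) e g.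
Proof.
rewrite -!lhs_diag -!rhs_diag -!big_split; apply: eq_bigr => b _.
by rewrite -!big_split; apply: eq_bigr => d _; exact: bilinear.
Qed.

(* Its t'_1-derivative restricted to the diagonal, when both left residues
   at the diagonal itself are of negative order. *)
Lemma bilinear_diag_d1 s r s' r' x e g :
  s' + r' - s - r + 1 < 0 -> s + r - s' - r' - 4 + 1 < 0 ->
  1 * diagL (s' + r' - s - r + 1 + 1) 1 (tps T s' r') (tps T s r) (x :: e) g
  + (-1) * diagL (s + r - s' - r' - 4 + 1 + 1) (-1)
      (tps T (s' + 1) (r' + 1)) (tps T (s - 1) (r - 1)) (x :: e) g
  = diagRd1 (- (s' - r' - s + r) - 1) 1 (tps T (s' + 1) r') (tps T (s - 1) r) (x :: e) g
  + diagRd1 (- (s - r - s' + r') - 1) (-1) (tps T s' (r' + 1)) (tps T s (r - 1)) (x :: e) g.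
Proof.
move=> m1_neg m2_neg.
rewrite -!lhs_diag_d1 // -!rhs_diag_d1 -!big_split /=; apply: eq_bigr => b _.
by rewrite -!mulrDr -!big_split; congr (_ * _); apply: eq_bigr => d _; exact: bilinear.
Qed.

(* The second equation: the restricted identity at (s', r') = (s, r) with
   (s, r) replaced by (s + 1, r - 1) keeps only the two order-1 residues. *)
Lemma hirota_second s r e g :
  hirota1 (@dT1 K) (tps T s r) (tps T (s + 1) (r - 1)) e g
  + hirota1 (@dTb1 K) (tps T s (r - 1)) (tps T (s + 1) r) e g = 0.
Proof.
have := bilinear_diag (s + 1) (r - 1) s r e g.
rewrite diagL_at1 ?diagL_neg ?diagR_at1 ?diagR_neg; try lia.
rewrite !addr0 addrK => /oppr_inj ->.
by rewrite [hirota1 _ (tps T s _) _ _ _]hirota1_antisym addrN.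
Qed.

(* The first equation, at monomials with an explicit t_1-exponent: the
   differentiated identity at (s', r') = (s - 1, r) with (s, r) replaced by
   (s + 1, r) keeps two products and one differentiated order-1 residue. *)
Lemma hirota_first_cons s r x e g :
  2^-1 * hirota2 (@dT1 K) (@dTb1 K) (tps T s r) (tps T s r) (x :: e) g
  + mulps (tps T (s - 1) r) (tps T (s + 1) r) (x :: e) g
  - mulps (tps T s (r - 1)) (tps T s (r + 1)) (x :: e) g = 0.
Proof.
have := bilinear_diag_d1 (s + 1) r (s - 1) r x e g ltac:(lia) ltac:(lia).
rewrite !diagL_at0 ?diagRd1_at1 ?diagRd1_neg; try lia.
rewrite subrK addrK addr0 mul1r mulN1r (mulpsC (tps T s (r + 1))) => diag_eq.
rewrite hirota2_self mulrA mulVf ?pnatr_eq0 // mul1r -addrA diag_eq.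
by rewrite addrC subrKA subrr.
Qed.

End HirotaEquations.

(* Monomials without a t_1-exponent reduce to the exponent 0 of t_1. *)
Theorem mainTheorem14 (K : numFieldType)
  (T : int -> int -> (nat -> nat) -> (nat -> nat) -> K) :
  PT_tau T ->
  forall s r : int,
    (forall a c : mono,
       2^-1 * hirota2 (@dT1 K) (@dTb1 K) (tps T s r) (tps T s r) a c
       + mulps (tps T (s - 1) r) (tps T (s + 1) r) a c
       - mulps (tps T s (r - 1)) (tps T s (r + 1)) a c = 0)
    /\
    (forall a c : mono,
       hirota1 (@dT1 K) (tps T s r) (tps T (s + 1) (r - 1)) a c
       + hirota1 (@dTb1 K) (tps T s (r - 1)) (tps T (s + 1) r) a c = 0).
Proof.
move=> [_ bilinear] s r; split => a c; last exact: (hirota_second T bilinear).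
case: a => [|x e]; last exact: (hirota_first_cons T bilinear).
rewrite /hirota2 !mulps_pad0; first exact: (hirota_first_cons T bilinear s r 0 [::] c).
all: first [exact: tps_pad0 | exact: dT1_pad0 | exact: dTb1_pad0 _ (tps_pad0 T s r)].
Qed.
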